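(* Let $G$ and $G_0$ be cacti-graphs with $G_0$ a subgraph of $G$. Then either $G=G_0$ or there exist sequences $(P_1,\dots,P_r)$ and $(G_0,G_1,\dots,G_r)$ of subgraphs of $G$ such that $G_r=G$, every $G_i$ is a cacti-graph, and for every $i\in\{1,\dots,r\}$: $G_i=G_{i-1}\cup P_i$ with $E(P_i)\cap E(G_{i-1})=\emptyset$, where $P_i$ is a path, a cycle, a lollipop, or a bicycle, and (p) if $P_i$ is a path then $V(G_{i-1})\cap V(P_i)=End(P_i)$; (l) if $P_i$ is a lollipop then $V(G_{i-1})\cap V(P_i)=End(P_i)$; (c) if $P_i$ is a cycle then $|V(G_{i-1})\cap V(P_i)|=1$; (b) if $P_i$ is a bicycle then $V(G_{i-1})\cap V(P_i)=\emptyset$. Consequently $G_{i-1}$ is a proper subgraph of $G_i$ and $\Delta G_i-\Delta G_{i-1}=1$ for all $i$.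
   Context: Graphs are finite, may have loops and parallel edges, and have no isolated vertices unless stated otherwise. A leaf is a vertex incident to exactly one edge, which is not a loop. $\Delta G=|E(G)|-|V(G)|$. A cycle is a connected graph all of whose vertices have degree 2 (a loop contributes 2; a single vertex with a loop is a cycle). An $(x,y)$-path is a path with distinct end vertices $x,y$ and at least one edge, and $End(P)=\{x,y\}$. A lollipop is a graph obtained from a cycle $C$ (possibly a loop) and a vertex-disjoint path $P$ with end vertices $y,x$ by identifying a vertex of $C$ with $y$; $End(Q)=\{x\}$. A bicycle is a connected graph with no leaves and $\Delta=1$. A cacti-graph is a graph with no isolated vertices, no leaves, and no component that is a cycle (equivalently, no isolated vertices, no leaves, and every component contains at least two cycles). *)

(* Multigraphs (loops and parallel edges allowed) inside an
   ambient incidence structure: vertex type V, edge type E, and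
   ends : E -> V * V giving the two (unordered) end vertices of each edge
   (a loop e has (ends e).1 = (ends e).2). *)
From HB Require Import structures.
From mathcomp Require Import all_boot all_order all_algebra.
Set Implicit Arguments. Unset Strict Implicit. Unset Printing Implicit Defensive.

Record mgraph (V E : finType) := MGraph { gV : {set V}; gE : {set E} }.

Section MultiGraphs.
Variables (V E : finType) (ends : E -> V * V).
Implicit Types (G H : mgraph V E).

Definition wf G := forall e, e \in gE G -> ((ends e).1 \in gV G) && ((ends e).2 \in gV G).

Definition subgraph H G := (gV H \subset gV G) && (gE H \subset gE G).
Definition proper_subgraph H G := subgraph H G /\ H <> G.

Definition gunion G H := MGraph (gV G :|: gV H) (gE G :|: gE H).

Definition Delta G : int := (#|gE G|%:Z - #|gV G|%:Z)%R.

Definition incident G v := [set e in gE G | ((ends e).1 == v) || ((ends e).2 == v)].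
(* degree; a loop contributes 2 *)
Definition deg G v := #|[set e in gE G | (ends e).1 == v]| + #|[set e in gE G | (ends e).2 == v]|.

Definition isolated G v := (v \in gV G) && (incident G v == set0).
Definition is_leaf G v := (v \in gV G) /\
  exists e, incident G v = [set e] /\ (ends e).1 != (ends e).2.

Definition no_isolated G := forall v, ~~ isolated G v.
Definition no_leaves G := forall v, ~ is_leaf G v.

Definition adj G : rel V := fun x y =>
  [exists e in gE G, (ends e == (x, y)) || (ends e == (y, x))].

Definition connected G := gV G != set0 /\
  forall x y, x \in gV G -> y \in gV G -> connect (adj G) x y.

Definition is_cycle G := connected G /\ forall v, v \in gV G -> deg G v = 2.

Definition is_path_xy G (x y : V) := exists (vs : seq V) (es : seq E),
  [/\ size vs = (size es).+1, 0 < size es, uniq vs && uniq es,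
      (forall (i : nat) (e0 : E), i < size es ->
        (ends (nth e0 es i) == (nth x vs i, nth x vs i.+1)) ||
        (ends (nth e0 es i) == (nth x vs i.+1, nth x vs i))) &
      [/\ head x vs = x, last x vs = y,
          gV G = [set v in vs] & gE G = [set e in es]]].

Definition is_path G := exists x y, is_path_xy G x y.

(* a lollipop with End = {x}: a cycle C and a path Q with ends y, x, glued
   by identifying y with a vertex of C *)
Definition is_lollipop_x G (x : V) := exists (C Q : mgraph V E) (y : V),
  [/\ is_cycle C, is_path_xy Q y x, gV C :&: gV Q = [set y],
      gE C :&: gE Q = set0 & G = gunion C Q].

Definition is_lollipop G := exists x, is_lollipop_x G x.

Definition is_bicycle G := [/\ connected G, no_leaves G & Delta G = 1%R].

Definition component G v :=
  MGraph [set u in gV G | connect (adj G) v u]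
         [set e in gE G | connect (adj G) v (ends e).1].

Definition cacti G := [/\ no_isolated G, no_leaves G &
  forall v, v \in gV G -> ~ is_cycle (component G v)].

End MultiGraphs.

(* The decomposition is built greedily. While the cacti-subgraph H differs from
   G, some edge of G lies outside H. If such an edge meets H, follow new edges
   from it (possible as G has no leaves) until the walk returns to H, giving a
   path or a cycle, or to itself, giving a lollipop. Otherwise such a walk closes
   into a cycle C disjoint from H; since the component of G through C is not a
   cycle, a new edge leaves C, and the walk it starts ends on C or on itself,
   so that C and this walk form a bicycle. In all cases the new vertices get
   degree 2 and every new component meets H or has a vertex of degree 3, so the
   union is again a cacti-graph; counting vertices and edges gives Delta + 1. *)

From mathcomp Require Import all_boot all_order all_algebra.
From mathcomp Require Import zify.
Set Implicit Arguments. Unset Strict Implicit. Unset Printing Implicit Defensive.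

Lemma card_uniq_count (T : finType) (s : seq T) (P : pred T) :
  uniq s -> #|[set x in s | P x]| = count P s.
Proof.
move=> s_uniq; rewrite -size_filter -(card_uniqP (filter_uniq P s_uniq)).
by apply: eq_card => x; rewrite !inE mem_filter andbC.
Qed.

Lemma card_set_uniq (T : finType) (s : seq T) : uniq s -> #|[set x in s]| = size s.
Proof. by move=> /card_uniqP <-; rewrite cardsE. Qed.

Section CactiEars.
Variables (V E : finType) (ends : E -> V * V).
Implicit Types (G H : mgraph V E) (u v w x y : V) (e f : E).

Definition inc v e := ((ends e).1 == v) || ((ends e).2 == v).
Definition links x y e := (ends e == (x, y)) || (ends e == (y, x)).
Definition other_end v e := if (ends e).1 == v then (ends e).2 else (ends e).1.

Lemma links_inc x y e : links x y e -> inc x e && inc y e.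
Proof. by rewrite /links /inc; case/orP=> /eqP ->; rewrite /= !eqxx ?orbT. Qed.

Lemma links_other_end v e : inc v e -> links v (other_end v e) e.
Proof.
rewrite /inc /links /other_end; case: eqP => [<-|_] /= h.
  by rewrite -surjective_pairing eqxx.
by rewrite -(eqP h) -surjective_pairing eqxx orbT.
Qed.

Lemma inc_wf G v e : wf ends G -> e \in gE G -> inc v e -> v \in gV G.
Proof. by move=> /(_ e) hG /hG /andP[h1 h2] /orP[]/eqP <-. Qed.

Lemma mgraph_eq G H : gV G = gV H -> gE G = gE H -> G = H.
Proof. by case: G; case: H => /= ? ? ? ? -> ->. Qed.

Lemma wf_gunion G H : wf ends G -> wf ends H -> wf ends (gunion G H).
Proof.
move=> hG hH e; rewrite !inE => /orP[/hG|/hH] /andP[-> ->]; by rewrite ?orbT.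
Qed.

Lemma subgraph_gunion G H K : subgraph H G -> subgraph K G -> subgraph (gunion H K) G.
Proof. by case/andP=> ? ? /andP[? ?]; apply/andP; split; rewrite subUset; apply/andP. Qed.

Lemma subgraph_gunionl G H : subgraph G (gunion G H).
Proof. by apply/andP; split; apply: subsetUl. Qed.

Definition fst_edges G v := [set e in gE G | (ends e).1 == v].
Definition snd_edges G v := [set e in gE G | (ends e).2 == v].

Lemma degE G v : deg ends G v = #|fst_edges G v| + #|snd_edges G v|.
Proof. by []. Qed.

Lemma incidentE G v : incident ends G v = fst_edges G v :|: snd_edges G v.
Proof. by apply/setP => e; rewrite !inE andb_orr. Qed.

Lemma card_incident_deg G v : #|incident ends G v| <= deg ends G v.
Proof. by rewrite incidentE degE; apply: leq_card_setU. Qed.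

Lemma deg_ge2_edges G v e f : e \in gE G -> f \in gE G -> e != f ->
  inc v e -> inc v f -> 2 <= deg ends G v.
Proof.
move=> he hf hef hve hvf; apply: leq_trans (card_incident_deg G v).
have sub : [set e; f] \subset incident ends G v.
  by apply/subsetP => g; rewrite !inE => /orP[]/eqP->; rewrite ?he ?hf.
by apply: leq_trans (subset_leq_card sub); rewrite cards2 hef.
Qed.

Lemma deg_ge2_loop G v e : e \in gE G -> ends e = (v, v) -> 2 <= deg ends G v.
Proof.
move=> he hl; rewrite degE -(addn1 1) leq_add //; apply/card_gt0P;
by exists e; rewrite !inE he hl eqxx.
Qed.

Lemma deg_subset G H v : gE H \subset gE G -> deg ends H v <= deg ends G v.
Proof.
move=> sHG; rewrite !degE; apply: leq_add; apply: subset_leq_card;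
by apply/subsetP => e; rewrite !inE => /andP[/(subsetP sHG) -> ->].
Qed.

Lemma deg_subset_lt G H v f : gE H \subset gE G -> f \in gE G -> f \notin gE H ->
  inc v f -> deg ends H v < deg ends G v.
Proof.
move=> sHG hf hfH; have sub g : g \in gE H -> g \in gE G := subsetP sHG g.
have le_card (pr : V * V -> V) :
    #|[set e in gE H | pr (ends e) == v]| <= #|[set e in gE G | pr (ends e) == v]|.
  by apply: subset_leq_card; apply/subsetP => e; rewrite !inE => /andP[/sub -> ->].
have lt_card (pr : V * V -> V) : pr (ends f) == v ->
    #|[set e in gE H | pr (ends e) == v]| < #|[set e in gE G | pr (ends e) == v]|.
  move=> hv; apply: proper_card; apply/properP; split.
    by apply/subsetP => e; rewrite !inE => /andP[/sub -> ->].
  by exists f; rewrite !inE ?hf ?hv ?(negbTE hfH).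
rewrite !degE /inc => /orP[/(lt_card fst) h|/(lt_card snd) h].
  by rewrite -addSn leq_add ?(le_card snd).
by rewrite -addnS leq_add ?(le_card fst).
Qed.

Lemma deg_eq_card_incident G v :
  fst_edges G v :&: snd_edges G v = set0 -> deg ends G v = #|incident ends G v|.
Proof. by move=> h; rewrite degE incidentE -cardsUI h cards0 addn0. Qed.

Lemma deg_ge2_not_leaf G v : 2 <= deg ends G v -> ~ is_leaf ends G v.
Proof.
move=> hd [_ [e [hi hne]]]; move: hd; rewrite deg_eq_card_incident ?hi ?cards1 //.
apply/setP => g; rewrite !inE; apply/negbTE/negP => /andP[/andP[hg /eqP h1] /andP[_ /eqP h2]].
have : g \in incident ends G v by rewrite !inE hg h1 eqxx.
by rewrite hi inE => /eqP hge; subst g; rewrite h1 h2 eqxx in hne.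
Qed.

Lemma deg_ge2_not_isolated G v : 2 <= deg ends G v -> ~~ isolated ends G v.
Proof.
move=> hd; apply/negP => /andP[_ /eqP hi]; move: hd.
have sub_inc (A : {set E}) : A \subset incident ends G v -> #|A| = 0.
  by move/subset_leq_card; rewrite hi cards0; case: #|A|.
by rewrite degE !sub_inc // incidentE ?subsetUl ?subsetUr.
Qed.

(* An incident loop alone already contributes 2 to the degree. *)
Lemma deg_ge2 G v : v \in gV G -> ~ is_leaf ends G v -> ~~ isolated ends G v ->
  2 <= deg ends G v.
Proof.
move=> hv hl hi; rewrite leqNgt; apply/negP => hd.
have hle : #|incident ends G v| <= 1 by apply: leq_trans (card_incident_deg G v) _.
case h0 : #|incident ends G v| hle => [|[|]] // _.
  by move: hi; rewrite /isolated hv -cards_eq0 h0.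
have /cards1P [e he] : #|incident ends G v| == 1 by rewrite h0.
apply: hl; split => //; exists e; split => //; apply/negP => /eqP hloop.
have : e \in incident ends G v by rewrite he inE.
rewrite inE => /andP[hE hev].
have : 2 <= deg ends G v.
  apply: (deg_ge2_loop hE); move: hev hloop; rewrite /inc.
  by case: (ends e) => a b /= + hab; rewrite hab orbb => /eqP ->.
by rewrite ltnNge -ltnS hd.
Qed.

Lemma adj_sym G : symmetric (adj ends G).
Proof.
by move=> x y; apply/existsP/existsP => -[e /andP[he h]]; exists e; rewrite he /= orbC.
Qed.

Lemma connect_symE G x y : connect (adj ends G) x y = connect (adj ends G) y x.
Proof. exact/sym_connect_sym/adj_sym. Qed.

Lemma adj_links G x y e : e \in gE G -> links x y e -> adj ends G x y.
Proof. by move=> he h; apply/existsP; exists e; rewrite he. Qed.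

Lemma connect_subset G H x y : gE H \subset gE G ->
  connect (adj ends H) x y -> connect (adj ends G) x y.
Proof.
move=> sHG; apply: connect_sub => a b /existsP[e /andP[he h]].
by apply/connect1/(adj_links (subsetP sHG _ he)).
Qed.

Lemma deg_component G v x : connect (adj ends G) v x ->
  deg ends (component ends G v) x = deg ends G x.
Proof.
move=> hvx; rewrite !degE; congr (_ + _); apply: eq_card => e; rewrite !inE /=.
  by case: eqP => [->|]; rewrite ?hvx ?andbT ?andbF.
case: eqP => [h2|]; last by rewrite !andbF.
case he : (e \in gE G) => //=; rewrite !andbT.
apply: connect_trans hvx _; rewrite connect_symE; apply/connect1/(adj_links he).
by rewrite /links -h2 -surjective_pairing eqxx.
Qed.

Lemma connect_component G v y x : connect (adj ends G) v y -> connect (adj ends G) y x ->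
  connect (adj ends (component ends G v)) y x.
Proof.
move=> + /connectP[s hp ->]; elim: s y hp => [|z s IH] y //= /andP[hyz hp] hvy.
have hvz : connect (adj ends G) v z := connect_trans hvy (connect1 hyz).
apply: connect_trans (connect1 _) (IH _ hp hvz).
case/existsP: hyz => e /andP[he h]; apply: (adj_links _ h); rewrite inE he /=.
by case/orP: h => /eqP ->.
Qed.

Lemma connected_component G v : v \in gV G -> connected ends (component ends G v).
Proof.
move=> hv; split; first by apply/set0Pn; exists v; rewrite inE hv connect0.
move=> x y; rewrite !inE => /andP[_ hx] /andP[_ hy].
apply: (connect_trans (y := v)); last exact: connect_component (connect0 _ _) hy.
by rewrite connect_symE; apply: connect_component (connect0 _ _) hx.
Qed.

(* A cycle component of G would contain a vertex of degree 3, or else, through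
   a vertex of H, would restrict to a cycle component of H. *)
Lemma cacti_supergraph H G : subgraph H G -> cacti ends H ->
  (forall v, v \in gV G -> 2 <= deg ends G v) ->
  (forall v, v \in gV G -> exists w, connect (adj ends G) v w /\
      ((w \in gV H) || ((w \in gV G) && (3 <= deg ends G w)))) ->
  cacti ends G.
Proof.
case/andP=> sV sE [hHi hHl hHc] hdeg hcon; split.
- move=> v; case hv: (v \in gV G); last by rewrite /isolated hv.
  exact/deg_ge2_not_isolated/hdeg.
- by move=> v hl; apply: deg_ge2_not_leaf (hdeg v hl.1) hl.
move=> v hv [hc hcd].
case: (hcon v hv) => w [hvw /orP[hw|/andP[hw hd]]]; last first.
  have : w \in gV (component ends G v) by rewrite inE hw hvw.
  by move/hcd; rewrite deg_component // => h; rewrite h in hd.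
apply: (hHc w hw); split; first exact: connected_component.
move=> x; rewrite inE => /andP[hxH hwx]; rewrite deg_component //.
have hvx : connect (adj ends G) v x by apply: connect_trans hvw (connect_subset sE hwx).
have := hcd x; rewrite inE (subsetP sV _ hxH) hvx deg_component // => /(_ isT) h2.
apply/eqP; rewrite eqn_leq deg_ge2 // andbT -h2; exact: deg_subset.
Qed.

Lemma component_eq G C c : wf ends G -> wf ends C -> subgraph C G -> c \in gV C ->
  (forall x, x \in gV C -> connect (adj ends C) c x) ->
  (forall y e, y \in gV C -> e \in gE G -> inc y e -> e \in gE C) ->
  component ends G c = C.
Proof.
move=> hG hC /andP[sV sE] hc hconC hclos.
have closed y z : y \in gV C -> adj ends G y z -> z \in gV C.
  move=> hy /existsP[e /andP[he /links_inc/andP[iy iz]]].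
  exact: inc_wf hC (hclos y e hy he iy) iz.
have reach x : connect (adj ends G) c x -> x \in gV C.
  move=> /connectP[s hp ->]; elim: s c hc hp {hconC} => [|y s IH] c0 hc0 //= /andP[h hp].
  exact: IH (closed _ _ hc0 h) hp.
apply: mgraph_eq; apply/setP => x; rewrite !inE; apply/idP/idP.
- by case/andP=> _ /reach.
- by move=> hx; rewrite (subsetP sV _ hx) (connect_subset sE (hconC x hx)).
- by case/andP=> hx /reach h1; apply: (hclos _ x h1 hx); rewrite /inc eqxx.
move=> hx; rewrite (subsetP sE _ hx) (connect_subset sE) // hconC //.
by case/andP: (hC x hx).
Qed.

(** * Walks *)

(* A walk from [a] is the list of its steps (edge, vertex reached). *)
Fixpoint walk a (p : seq (E * V)) : bool :=
  if p is s :: p' then links a s.2 s.1 && walk s.2 p' else true.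

Definition walk_graph a (p : seq (E * V)) :=
  MGraph [set v in a :: map snd p] [set e in map fst p].

Lemma walk_cat a p1 p2 :
  walk a (p1 ++ p2) = walk a p1 && walk (last a (map snd p1)) p2.
Proof. by elim: p1 a => [|s p1 IH] a //=; rewrite IH andbA. Qed.

Lemma walk_rcons a p s :
  walk a (rcons p s) = walk a p && links (last a (map snd p)) s.2 s.1.
Proof. by rewrite -cats1 walk_cat /= andbT. Qed.

Lemma walk_inc a p : walk a p -> forall s, s \in p -> inc s.2 s.1.
Proof.
elim: p a => [|s p IH] a //= /andP[hl hw] t; rewrite inE => /orP[/eqP ->|].
  by case/andP: (links_inc hl).
exact: IH hw t.
Qed.

Lemma walk_first_edge a p : p != [::] -> walk a p -> exists2 e, e \in map fst p & inc a e.
Proof.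
case: p => [|s p] // _ /andP[hl _]; exists s.1; first by rewrite inE eqxx.
by case/andP: (links_inc hl).
Qed.

Lemma walk_inc_mem a p e x : walk a p -> e \in map fst p -> inc x e ->
  x \in a :: map snd p.
Proof.
elim: p a => [|s p IH] a //= /andP[hl hw]; rewrite inE => /orP[/eqP ->|he] hx.
  move: hl hx; rewrite /links /inc.
  by case/orP=> /eqP -> /= /orP[]/eqP <-; rewrite !inE eqxx ?orbT.
by rewrite inE (IH _ hw he hx) orbT.
Qed.

Lemma walk_nth a p x0 e0 i : walk a p -> i < size p ->
  links (nth x0 (a :: map snd p) i) (nth x0 (map snd p) i) (nth e0 (map fst p) i).
Proof.
elim: p a i => [|s p IH] a i //= /andP[hl hw]; case: i => [|i] //= hi; exact: IH.
Qed.

Lemma wf_walk_graph a p : walk a p -> wf ends (walk_graph a p).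
Proof.
move=> hw e; rewrite !inE => he.
by apply/andP; split; apply: walk_inc_mem hw he _; rewrite /inc eqxx ?orbT.
Qed.

Lemma walk_connect G a p v : walk a p -> {subset map fst p <= gE G} ->
  v \in a :: map snd p -> connect (adj ends G) a v.
Proof.
elim: p a => [|s p IH] a /=; first by move=> _ _; rewrite inE => /eqP ->.
case/andP=> hl hw hE; rewrite inE => /orP[/eqP ->//|hv].
apply: connect_trans (connect1 (adj_links (hE _ (mem_head _ _)) hl)) _.
by apply: IH hw _ hv => e he; apply: hE; rewrite inE he orbT.
Qed.

Lemma walk_graph_connect a p v : walk a p -> v \in gV (walk_graph a p) ->
  connect (adj ends (walk_graph a p)) a v.
Proof. by move=> hw; rewrite inE; apply: walk_connect hw _ => e; rewrite inE. Qed.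

Lemma walk_graph_cover a p v : p != [::] -> walk a p -> v \in gV (walk_graph a p) ->
  exists2 e, e \in gE (walk_graph a p) & inc v e.
Proof.
move=> hp hw; rewrite inE inE => /orP[/eqP ->|].
  by case: (walk_first_edge hp hw) => e he hae; exists e; rewrite ?inE.
by case/mapP => s hs ->; exists s.1; [rewrite inE map_f | exact: walk_inc hw s hs].
Qed.

Lemma subgraph_walk_graph G a p : wf ends G -> p != [::] -> walk a p ->
  {subset map fst p <= gE G} -> subgraph (walk_graph a p) G.
Proof.
move=> hG hp hw hs; apply/andP; split; apply/subsetP => x hx.
  case: (walk_graph_cover hp hw hx) => e he hxe; apply: inc_wf hG _ hxe.
  by apply: hs; rewrite inE in he.
by apply: hs; rewrite inE in hx.
Qed.

Lemma walk_graph_path a p : walk a p -> p != [::] -> uniq (a :: map snd p) ->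
  uniq (map fst p) -> is_path_xy ends (walk_graph a p) a (last a (map snd p)).
Proof.
move=> hw hp huv hue; exists (a :: map snd p), (map fst p); split => //.
- by rewrite /= !size_map.
- by rewrite size_map; case: (p) hp.
- by rewrite huv hue.
- by move=> i e0; rewrite size_map => hi; apply: walk_nth.
Qed.

Lemma path_xy_rev G x y : is_path_xy ends G x y -> is_path_xy ends G y x.
Proof.
case=> vs [es [hs hes /andP[hu1 hu2] hn [hh hl hV hE]]].
exists (rev vs), (rev es); split; rewrite ?size_rev ?rev_uniq ?hu1 ?hu2 //.
- move=> i e0 hi; rewrite nth_rev // !nth_rev ?hs; try lia.
  have hj : size es - i.+1 < size es by lia.
  have -> : (size es).+1 - i.+2 = size es - i.+1 by lia.
  have -> : (size es).+1 - i.+1 = (size es - i.+1).+1 by lia.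
  rewrite orbC !(set_nth_default x y) ?hs //; first exact: hn.
  by apply: leq_trans hj _; rewrite -ltnS -hs.
case: vs hs hh hl hV {hn hu1} => [|v0 vs] //= _ hh hl hV; split.
- have head_rev (s : seq V) d : head d (rev s) = last d s.
    by case/lastP: s => [|s w] //; rewrite rev_rcons last_rcons.
  by rewrite head_rev.
- by rewrite rev_cons last_rcons hh.
- by rewrite hV; apply/setP => w; rewrite !inE mem_rev.
- by rewrite hE; apply/setP => w; rewrite !inE mem_rev.
Qed.

Lemma walk_count_ends a p v : walk a p ->
  count (fun s : E * V => (ends s.1).1 == v) p + count (fun s : E * V => (ends s.1).2 == v) p
  = count (pred1 v) (belast a (map snd p)) + count (pred1 v) (map snd p).
Proof.
elim: p a => [|s p IH] a //= /andP[hl hw].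
have hs : ((ends s.1).1 == v) + ((ends s.1).2 == v) = (a == v) + (s.2 == v) :> nat.
  by case/orP: hl => /eqP ->; rewrite //= addnC.
by rewrite [LHS]addnACA hs (IH _ hw) addnACA.
Qed.

Section ClosedWalk.
Variables (c : V) (p : seq (E * V)).
Hypotheses (hw : walk c p) (hp : p != [::]) (hclosed : last c (map snd p) = c)
  (hue : uniq (map fst p)) (huv : uniq (map snd p)).

Lemma closed_walk_vertices : gV (walk_graph c p) = [set v in map snd p].
Proof.
apply/setP => v; rewrite !inE; case: eqP => // ->.
case: p hp hclosed => [|s q] //= _ hl.
by have := mem_last s.2 (map snd q); rewrite hl.
Qed.

Lemma closed_walk_Delta : Delta (walk_graph c p) = 0%R.
Proof.
by rewrite /Delta closed_walk_vertices /= !card_set_uniq // !size_map GRing.subrr.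
Qed.

(* Each vertex occurs once in [map snd p] and once in [belast c (map snd p)],
   a rotation of it; these count its two edge ends. *)
Lemma closed_walk_cycle : is_cycle ends (walk_graph c p).
Proof.
have hc : c \in gV (walk_graph c p) by rewrite !inE eqxx.
split.
  split; first by apply/set0Pn; exists c.
  move=> x y hx hy; apply: (connect_trans (y := c)); last exact: walk_graph_connect.
  by rewrite connect_symE; apply: walk_graph_connect.
move=> v; rewrite closed_walk_vertices inE => hv.
have card_ends (pr : V * V -> V) :
    #|[set e in gE (walk_graph c p) | pr (ends e) == v]|
    = count (fun s : E * V => pr (ends s.1) == v) p.
  rewrite -[RHS](count_map fst (fun e => pr (ends e) == v)) -card_uniq_count //.
  by apply: eq_card => e; rewrite !inE.
rewrite degE /fst_edges /snd_edges !card_ends (walk_count_ends v hw).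
have -> : count (pred1 v) (belast c (map snd p)) = count (pred1 v) (map snd p).
  have := congr1 (count (pred1 v)) (lastI c (map snd p)).
  by rewrite hclosed -cats1 count_cat /= addn0 addnC => /addIn ->.
by rewrite (count_uniq_mem v huv) hv.
Qed.

End ClosedWalk.

(** * Ear walks *)

Definition fresh G (F : {set E}) e := (e \in gE G) && (e \notin F).

(* The last step [(e, z)] is singled out: it is the only one that may land in
   [S] or on a vertex already visited. *)
Definition ear_walk G F (S : {set V}) u q e z := let p := rcons q (e, z) in
  [/\ walk u p, uniq (map fst p), all (fresh G F) (map fst p),
      uniq (map snd q) && all [predC S] (map snd q) & (z \in S) || (z \in map snd q)].

Lemma no_leaves_other_edge G v e : wf ends G -> no_leaves ends G -> e \in gE G ->
  inc v e -> (ends e).1 != (ends e).2 -> exists2 f, f \in gE G & inc v f && (f != e).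
Proof.
move=> hG hnl he hve hloop.
case: (boolP [exists f, [&& f \in gE G, inc v f & f != e]]) => [/existsP[f]|hno].
  by case/and3P=> hf hvf hfe; exists f; rewrite ?hvf.
exfalso; apply: (hnl v); split; first exact: inc_wf hG he hve.
exists e; split => //; apply/setP => f; rewrite !inE; apply/idP/idP.
  case/andP=> hf hvf; apply/negPn/negP => hfe.
  by apply: (negP hno); apply/existsP; exists f; rewrite hf hfe andbT.
by move/eqP ->; rewrite he.
Qed.

Section Growth.
Variables (G : mgraph V E) (F : {set E}) (S : {set V}) (u : V).
Hypotheses (hG : wf ends G) (hnl : no_leaves ends G)
  (hFS : forall f v, f \in F -> inc v f -> v \in S) (hu : u \in S).

Definition open_walk q := [&& walk u q, uniq (map fst q), all (fresh G F) (map fst q),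
  uniq (map snd q) & all [predC S] (map snd q)].

Lemma open_walk_extend q : q != [::] -> open_walk q ->
  exists2 f, fresh G F f & (f \notin map fst q) && inc (last u (map snd q)) f.
Proof.
case/lastP: q => [|q [e v]] // _.
rewrite /open_walk !map_rcons walk_rcons all_rcons !rcons_uniq all_rcons last_rcons /=.
case/and5P=> /andP[hwq hl] /andP[heq _] /andP[/andP[he _] _] /andP[hvq _] /andP[hvS _].
(* The endpoint [v] is new, so the last edge is not a loop and, as there are no
   leaves, another edge leaves [v]; it is fresh since [v] is outside [S], and
   unused since [v] was not visited before. *)
have hvu : v != u by apply: contraNneq hvS => ->.
have hloop : (ends e).1 != (ends e).2.
  apply: contraNneq hvq => h12.
  have hlast : last u (map snd q) = v by case/orP: hl => /eqP he'; rewrite he' /= in h12.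
  by have := mem_last u (map snd q); rewrite hlast inE (negbTE hvu).
have /andP[_ hve] := links_inc hl.
have [f hf /andP[hvf hfe]] := no_leaves_other_edge hG hnl he hve hloop.
exists f; first by rewrite /fresh hf; apply: contraNN hvS => /hFS; apply.
rewrite hvf mem_rcons inE (negbTE hfe) /= andbT; apply/negP => hfq.
have := walk_inc_mem hwq hfq hvf; rewrite inE (negbTE hvu) /=.
exact/negP.
Qed.

Lemma open_walk_size q : open_walk q -> size q <= #|V|.
Proof. by case/and5P=> _ _ _ /card_uniqP; rewrite size_map => <- _; apply: max_card. Qed.

Lemma ear_walk_or_open_walk q f : open_walk q -> fresh G F f ->
  f \notin map fst q -> inc (last u (map snd q)) f ->
  let z := other_end (last u (map snd q)) f in
  ear_walk G F S u q f z \/ open_walk (rcons q (f, z)).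
Proof.
move=> hq hf hfq hvf z; have hlz := links_other_end hvf.
case/and5P: hq => hwq hueq hfrq huvq hSq.
have hw : walk u (rcons q (f, z)) by rewrite walk_rcons hwq.
have hue : uniq (map fst (rcons q (f, z))) by rewrite map_rcons rcons_uniq hfq.
have hfr : all (fresh G F) (map fst (rcons q (f, z))) by rewrite map_rcons all_rcons hf.
case: (boolP ((z \in S) || (z \in map snd q))) => hz.
  by left; split; rewrite ?huvq.
right; move: hz; rewrite negb_or => /andP[hzS hzq].
by rewrite /open_walk hw hue hfr map_rcons rcons_uniq all_rcons /= hzq hzS huvq.
Qed.

Lemma ear_walk_exists e : fresh G F e -> inc u e -> exists q e' z, ear_walk G F S u q e' z.
Proof.
suff grow n q f : #|V| - size q <= n -> open_walk q -> fresh G F f ->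
    f \notin map fst q -> inc (last u (map snd q)) f -> exists q e' z, ear_walk G F S u q e' z.
  by move=> he hue; apply: (grow _ [::] e (leqnn _)).
elim: n q f => [|n IH] q f hn hq hf hfq hvf;
  case: (ear_walk_or_open_walk hq hf hfq hvf) => [hear|hq']; try by do 3 eexists; exact: hear.
  by have := open_walk_size hq'; rewrite size_rcons; move: hn; lia.
have [|f' hf' /andP[hf'q hvf']] := open_walk_extend _ hq'; first by case: (q).
apply: (IH _ f' _ hq' hf' hf'q hvf').
by have := open_walk_size hq'; move: hn; rewrite size_rcons; lia.
Qed.

End Growth.

Definition ear_attached H P :=
  [\/ exists x y, is_path_xy ends P x y /\ gV H :&: gV P = [set x; y],
      exists x, is_lollipop_x ends P x /\ gV H :&: gV P = [set x],
      is_cycle ends P /\ #|gV H :&: gV P| = 1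
    | is_bicycle ends P /\ gV H :&: gV P = set0].

Section Attach.
Variables (X : mgraph V E) (u : V) (q : seq (E * V)) (e : E) (z : V).
Let p := rcons q (e, z).
Hypotheses (hu : u \in gV X) (hw : walk u p) (hue : uniq (map fst p))
  (hE : all [predC gE X] (map fst p))
  (hq : uniq (map snd q) && all [predC gV X] (map snd q))
  (hz : (z \in gV X) || (z \in map snd q)).

Lemma attach_meet x :
  (x \in gV X :&: gV (walk_graph u p)) = (x == u) || ((x == z) && (z \in gV X)).
Proof.
case/andP: hq => _ /allP hall.
rewrite !inE /p map_rcons mem_rcons !inE.
case: (eqVneq x u) => [->|hxu]; first by rewrite hu.
case: (eqVneq x z) => [->|hxz] /=; first by rewrite andbT; case: (z \in gV X).
by case hx: (x \in map snd q); rewrite ?andbF // andbT (negbTE (hall x hx)).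
Qed.

Lemma attach_card_edges : #|gE (gunion X (walk_graph u p))| = #|gE X| + size p.
Proof.
rewrite /= cardsU (_ : _ :&: _ = set0) ?cards0 ?subn0 ?card_set_uniq ?size_map //.
apply/setP => f; rewrite !inE; apply/negbTE/negP => /andP[h1 h2].
by have := allP hE f h2; rewrite /= h1.
Qed.

Lemma attach_card_vertices : #|gV (gunion X (walk_graph u p))| = #|gV X| + size q.
Proof.
case/andP: hq => hqu /allP hall.
have -> : gV (gunion X (walk_graph u p)) = gV X :|: [set v in map snd q].
  apply/setP => x; rewrite !inE /p map_rcons mem_rcons !inE.
  case: (eqVneq x u) => [->|_]; first by rewrite hu.
  case: (eqVneq x z) => [->|_] //=.
  by case/orP: hz => ->; rewrite ?orbT.
rewrite cardsU (_ : _ :&: _ = set0) ?cards0 ?subn0 ?card_set_uniq ?size_map //.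
apply/setP => x; rewrite !inE; apply/negbTE/negP => /andP[h1 h2].
by have := hall x h2; rewrite /= h1.
Qed.

Lemma attach_Delta : Delta (gunion X (walk_graph u p)) = (Delta X + 1)%R.
Proof.
rewrite /Delta attach_card_edges attach_card_vertices /p size_rcons.
move: #|gE X| #|gV X| (size q) => a b c; rewrite !PoszD; lia.
Qed.

Lemma attach_deg v : v \in map snd q -> 2 <= deg ends (walk_graph u p) v.
Proof.
case/mapP => s1 hs1 ->; move: hw hue; rewrite /p.
case/splitPr: hs1 => q1 q2; rewrite rcons_cat rcons_cons walk_cat /= map_cat /= cat_uniq /=.
case/and3P=> _ hl1 hw2 /and4P[_ _ hn _].
have /andP[_ hs1] := links_inc hl1.
have in_walk f : f \in s1.1 :: map fst q2 ++ [:: e] ->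
    f \in gE (walk_graph u (q1 ++ s1 :: rcons q2 (e, z))).
  by move=> hf; rewrite inE map_cat mem_cat /= map_rcons -cats1 hf orbT.
case: q2 hw2 hn in_walk => [|s2 q2] /= /andP[/links_inc/andP[hs2 _] _] hn in_walk.
  apply: (@deg_ge2_edges _ _ s1.1 e _ _ _ hs1 hs2); rewrite ?in_walk ?inE ?eqxx ?orbT //.
  by apply: contraNneq hn => ->; apply: mem_head.
apply: (@deg_ge2_edges _ _ s1.1 s2.1 _ _ _ hs1 hs2); rewrite ?in_walk ?inE ?eqxx ?orbT //.
by apply: contraNneq hn => ->; apply: mem_head.
Qed.

Lemma attach_walk_nonempty : p != [::].
Proof. by rewrite /p; case: (q). Qed.

Lemma attach_last : last u (map snd p) = z.
Proof. by rewrite /p map_rcons last_rcons. Qed.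

Lemma attach_cycle : z = u ->
  is_cycle ends (walk_graph u p) /\ #|gV X :&: gV (walk_graph u p)| = 1.
Proof.
move=> hzu; case/andP: hq => hqu /allP hall; split.
  apply: closed_walk_cycle attach_walk_nonempty _ hue _ => //; first by rewrite attach_last.
  by rewrite /p map_rcons rcons_uniq hqu andbT hzu; apply: contraL hu => /hall.
rewrite (_ : _ :&: _ = [set u]) ?cards1 //.
by apply/setP => x; rewrite attach_meet inE hzu hu andbT orbb.
Qed.

Lemma attach_path : z \in gV X -> z != u ->
  is_path_xy ends (walk_graph u p) u z /\ gV X :&: gV (walk_graph u p) = [set u; z].
Proof.
move=> hzX hzu; case/andP: hq => hqu /allP hall; split.
  rewrite -attach_last; apply: walk_graph_path attach_walk_nonempty _ hue => //.
  rewrite /p map_rcons /= rcons_uniq hqu mem_rcons inE negb_or eq_sym hzu andbT /=.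
  by apply/andP; split; [apply: contraL hu | apply: contraL hzX] => /hall.
by apply/setP => x; rewrite attach_meet !inE hzX andbT.
Qed.

(* Closing up at an interior vertex [s.2] splits the walk into a path from [u]
   to [s.2] and a cycle through [s.2]. *)
Lemma attach_lollipop : z \in map snd q ->
  is_lollipop_x ends (walk_graph u p) u /\ gV X :&: gV (walk_graph u p) = [set u].
Proof.
move=> hzq; have hzX : z \notin gV X by case/andP: hq => _ /allP; apply.
split; last by apply/setP => x; rewrite attach_meet inE (negbTE hzX) andbF orbF.
case/andP: hq hzq => hqu /allP hall /mapP[s hs hsz]; subst z.
move: hw hue hall hqu; rewrite /p; case/splitPr: hs => q1 q2.
rewrite rcons_cat rcons_cons -cat_rcons walk_cat map_rcons last_rcons.
rewrite !map_cat !cat_uniq /= => /andP[hw1 hw2] /and3P[huE1 hnE huE2] hall.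
case/and3P=> hu1 hn12 /andP[hsq2 hu2].
have hq1X x : x \in map snd q1 -> x \notin gV X by move=> hx; apply: hall; rewrite mem_cat hx.
have hq2X x : x \in map snd q2 -> x \notin gV X.
  by move=> hx; apply: hall; rewrite mem_cat inE hx !orbT.
have hsX : s.2 \notin gV X by apply: hall; rewrite mem_cat mem_head orbT.
have hsq1 : s.2 \notin map snd q1 by apply: contra hn12 => ->.
have hq12 x : x \in map snd q2 -> x \notin map snd q1.
  by move=> hx2; apply: contra hn12 => hx1; apply/orP; right; apply/hasP; exists x.
exists (walk_graph s.2 (rcons q2 (e, s.2))), (walk_graph u (rcons q1 s)), s.2; split.
- apply: closed_walk_cycle hw2 _ _ huE2 _; rewrite ?map_rcons ?last_rcons //.
    by case: (q2).
  by rewrite rcons_uniq hsq2 hu2.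
- apply: path_xy_rev; rewrite -[s.2](last_rcons u (map snd q1)) -map_rcons.
  apply: walk_graph_path hw1 _ _ huE1 => //; first by case: (q1).
  rewrite /= map_rcons rcons_uniq hsq1 hu1 mem_rcons inE negb_or andbT.
  rewrite andbT (contraTneq _ hu) => [|->] //.
  by apply: contraTN hu => /hq1X.
- apply/setP => x; rewrite !inE !map_rcons !mem_rcons !inE.
  case: (eqVneq x s.2) => [->|hxs] /=; first by rewrite ?eqxx ?orbT.
  apply/negbTE/negP => /andP[hx2 /orP[/eqP hxu|hx1]].
    by have := hq2X _ hx2; rewrite hxu hu.
  by have := hq12 _ hx2; rewrite hx1.
- apply/setP => f; rewrite !inE; apply/negbTE/negP => /andP[h2 h1].
  by apply: (negP hnE); apply/hasP; exists f.
apply: mgraph_eq; apply/setP => x;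
  rewrite !inE ?map_cat !map_rcons ?mem_cat !mem_rcons !inE /= -!orbA.
  by case: (x == u); case: (x == s.2); case: (x \in map snd q1); case: (x \in map snd q2).
by case: (x == e); case: (x == s.1); case: (x \in map fst q1); case: (x \in map fst q2).
Qed.

Lemma attach_ear_attached : ear_attached X (walk_graph u p).
Proof.
case hzX : (z \in gV X); last first.
  by apply: Or42; exists u; apply: attach_lollipop; move: hz; rewrite hzX.
case: (eqVneq z u) => [hzu|hzu]; first by apply: Or43; apply: attach_cycle.
by apply: Or41; exists u, z; apply: attach_path.
Qed.

End Attach.

Record cacti_ear G H P : Prop := CactiEar {
  cacti_ear_wf : wf ends P;
  cacti_ear_sub : subgraph P G;
  cacti_ear_disjoint : gE P :&: gE H = set0;
  cacti_ear_attached : ear_attached H P;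
  cacti_ear_cacti : cacti ends (gunion H P);
  cacti_ear_proper : proper_subgraph H (gunion H P);
  cacti_ear_Delta : (Delta (gunion H P) - Delta H = 1)%R }.

Lemma proper_subgraph_gunion H P e : e \in gE P -> e \notin gE H ->
  proper_subgraph H (gunion H P).
Proof.
move=> heP heH; split; first exact: subgraph_gunionl.
by move=> hHP; move: heH; rewrite hHP inE heP orbT.
Qed.

Lemma deg_ge2_gunionl H P v : cacti ends H -> v \in gV H -> 2 <= deg ends (gunion H P) v.
Proof.
case=> hi hl _ hv; apply: leq_trans (deg_ge2 hv (hl v) (hi v)) _.
by apply: deg_subset; apply: subsetUl.
Qed.

Lemma ear_walk_cacti_ear G H u q e z : wf ends G -> cacti ends H -> u \in gV H ->
  ear_walk G (gE H) (gV H) u q e z -> cacti_ear G H (walk_graph u (rcons q (e, z))).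
Proof.
move=> hG hcH hu [hw hue hfr hq hz]; set p := rcons q (e, z).
have hE : all [predC gE H] (map fst p) by apply/allP => f /(allP hfr)/andP[].
have hp : p != [::] by rewrite /p; case: (q).
have he : e \in map fst p by rewrite /p map_rcons mem_rcons mem_head.
have hf : e \in gE (walk_graph u p) by rewrite inE.
split.
- exact: wf_walk_graph.
- by apply: subgraph_walk_graph => // g /(allP hfr)/andP[].
- apply/setP => g; rewrite !inE; apply/negbTE/negP => /andP[hg hgH].
  by move: (allP hE g hg); rewrite /= hgH.
- exact: attach_ear_attached.
- apply: (cacti_supergraph (subgraph_gunionl H _)) => // v.
    rewrite inE => /orP[hv|hv]; first exact: deg_ge2_gunionl.
    case hvH : (v \in gV H); first exact: deg_ge2_gunionl.
    have hvq : v \in map snd q.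
      move: hv hz; rewrite !inE /p map_rcons mem_rcons !inE /=.
      case/or3P=> [/eqP hvu|/eqP <-|//]; first by rewrite hvu hu in hvH.
      by rewrite hvH.
    apply: leq_trans (attach_deg hw hue hvq) _; apply: deg_subset; exact: subsetUr.
  rewrite inE => /orP[hv|hv]; first by exists v; rewrite connect0 hv.
  exists u; rewrite hu; split => //; rewrite connect_symE.
  by apply: (connect_subset (H := walk_graph u p)) (walk_graph_connect hw hv); apply: subsetUr.
- exact: proper_subgraph_gunion hf (allP hE e he).
- by rewrite (attach_Delta hu hw hue hE hq hz) GRing.addrAC GRing.subrr GRing.add0r.
Qed.

(** * Bicycles *)

Lemma bicycle_cacti_ear G H B a : cacti ends H -> wf ends B -> subgraph B G ->
  gE B :&: gE H = set0 -> gV H :&: gV B = set0 -> is_bicycle ends B -> a \in gV B ->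
  (forall v, v \in gV B -> 2 <= deg ends B v) -> 3 <= deg ends B a ->
  (forall v, v \in gV B -> connect (adj ends B) v a) -> cacti_ear G H B.
Proof.
move=> hcH hwB hsB hdE hdV hbic ha hdeg h3 hcon.
have sBU : gE B \subset gE (gunion H B) by apply: subsetUr.
have [f hf hfH] : exists2 f, f \in gE B & f \notin gE H.
  have /set0Pn[f] : incident ends B a != set0.
    by have := deg_ge2_not_isolated (hdeg a ha); rewrite /isolated ha.
  rewrite inE => /andP[hf _]; exists f => //; apply/negP => hfH.
  have : f \in gE B :&: gE H by rewrite inE hf hfH.
  by rewrite hdE inE.
split => //; first by apply: Or44.
- apply: (cacti_supergraph (subgraph_gunionl H B)) => // v.
    rewrite inE => /orP[hv|hv]; first exact: deg_ge2_gunionl.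
    exact: leq_trans (hdeg v hv) (deg_subset _ sBU).
  rewrite inE => /orP[hv|hv]; first by exists v; rewrite connect0 hv.
  exists a; split; first exact: connect_subset sBU (hcon v hv).
  by rewrite !inE ha orbT (leq_trans h3 (deg_subset _ sBU)) orbT.
- exact: proper_subgraph_gunion hf hfH.
have cardsU0 (T : finType) (X Y : {set T}) : X :&: Y = set0 -> #|X :|: Y| = #|X| + #|Y|.
  by move=> hXY; rewrite cardsU hXY cards0 subn0.
case: hbic => _ _; rewrite /Delta /= !cardsU0 // 1?setIC //.
move: #|gE H| #|gE B| #|gV H| #|gV B| => x1 x2 x3 x4; rewrite !PoszD; lia.
Qed.

Section CycleWithEar.
Variables (c : V) (pc : seq (E * V)) (a : V) (q : seq (E * V)) (e : E) (z : V).
Let C := walk_graph c pc.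
Let p := rcons q (e, z).
Let B := gunion C (walk_graph a p).
Hypotheses (hwc : walk c pc) (hpc : pc != [::]) (hlc : last c (map snd pc) = c)
  (huec : uniq (map fst pc)) (huvc : uniq (map snd pc))
  (ha : a \in gV C) (hw : walk a p) (hue : uniq (map fst p))
  (hE : all [predC gE C] (map fst p))
  (hq : uniq (map snd q) && all [predC gV C] (map snd q))
  (hz : (z \in gV C) || (z \in map snd q)).

Lemma cycle_ear_deg v : v \in gV B -> 2 <= deg ends B v.
Proof.
have hcyc := closed_walk_cycle hwc hpc hlc huec huvc.
have sCB : gE C \subset gE B by apply: subsetUl.
have hC w : w \in gV C -> 2 <= deg ends B w by move=> hw'; rewrite -(hcyc.2 w hw') deg_subset.
rewrite inE => /orP[/hC //|hv]; case hvC : (v \in gV C); first exact: hC.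
have hvq : v \in map snd q.
  move: hv hz; rewrite inE /p map_rcons in_cons mem_rcons in_cons /=.
  case/or3P=> [/eqP hva|/eqP <-|//]; first by rewrite hva ha in hvC.
  by rewrite hvC.
by apply: leq_trans (attach_deg hw hue hvq) _; apply: deg_subset; apply: subsetUr.
Qed.

Lemma cycle_ear_deg_branch : 3 <= deg ends B a.
Proof.
have hp : p != [::] by rewrite /p; case: (q).
case: (walk_first_edge hp hw) => f hf haf.
rewrite -((closed_walk_cycle hwc hpc hlc huec huvc).2 a ha).
apply: (deg_subset_lt (f := f)) => //; first exact: subsetUl.
  by rewrite /B !inE hf orbT.
exact: (allP hE f hf).
Qed.

Lemma cycle_ear_connect v : v \in gV B -> connect (adj ends B) v a.
Proof.
rewrite inE connect_symE => /orP[hv|hv].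
  apply: (connect_subset (H := C)); first exact: subsetUl.
  apply: (connect_trans (y := c)); last exact: walk_graph_connect.
  by rewrite connect_symE; apply: walk_graph_connect.
by apply: (connect_subset (H := walk_graph a p)); [apply: subsetUr | apply: walk_graph_connect].
Qed.

Lemma cycle_ear_bicycle : is_bicycle ends B.
Proof.
split.
- split; first by apply/set0Pn; exists a; rewrite inE ha.
  move=> x y hx hy; apply: (connect_trans (y := a)); first exact: cycle_ear_connect.
  by rewrite connect_symE; apply: cycle_ear_connect.
- by move=> v hl; apply: deg_ge2_not_leaf (cycle_ear_deg hl.1) hl.
rewrite /B (attach_Delta ha hw hue hE hq hz) (closed_walk_Delta hpc hlc huec huvc).
exact: GRing.add0r.
Qed.

End CycleWithEar.

(** * Extension steps *)

Lemma cacti_ear_touching G H u e : wf ends G -> no_leaves ends G -> wf ends H ->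
  cacti ends H -> u \in gV H -> fresh G (gE H) e -> inc u e -> exists P, cacti_ear G H P.
Proof.
move=> hG hnl hH hcH hu he hue.
have hFS f v : f \in gE H -> inc v f -> v \in gV H by apply: inc_wf.
have [q [e' [z hear]]] := ear_walk_exists hG hnl hFS hu he hue.
by exists (walk_graph u (rcons q (e', z))); apply: ear_walk_cacti_ear.
Qed.

Definition closed_walk c (pc : seq (E * V)) := [&& walk c pc, pc != [::],
  last c (map snd pc) == c, uniq (map fst pc) & uniq (map snd pc)].

Lemma ear_walk_closed_walk G F S u q e z : ear_walk G F S u q e z ->
  z \in map snd q -> exists c pc, closed_walk c pc && all (fresh G F) (map fst pc).
Proof.
case=> hw hue hfr /andP[hqu _] _ /mapP[s hs hsz]; subst z; exists s.2.
move: hw hue hfr hqu; case/splitPr: hs => q1 q2.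
rewrite rcons_cat rcons_cons -cat_rcons walk_cat map_rcons last_rcons !map_cat cat_uniq all_cat.
move=> /andP[_ hw2] /and3P[_ _ hue2] /andP[_ hfr2].
rewrite cat_uniq /= => /and3P[_ _ /andP[hsq2 hu2]].
exists (rcons q2 (e, s.2)); rewrite /closed_walk hw2 hue2 hfr2 !map_rcons last_rcons eqxx.
by rewrite rcons_uniq hsq2 hu2; case: (q2).
Qed.

Section Detached.
Variables (G H : mgraph V E).
Hypotheses (hG : wf ends G) (hnl : no_leaves ends G) (hH : wf ends H)
  (hdet : forall f v, fresh G (gE H) f -> inc v f -> v \notin gV H).

Lemma detached_closed_walk e : fresh G (gE H) e ->
  exists c pc, closed_walk c pc && all (fresh G (gE H)) (map fst pc).
Proof.
move=> he; set w := (ends e).1; set S := gV H :|: [set w].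
have hFS f v : f \in gE H -> inc v f -> v \in S by move=> hf hv; rewrite inE (inc_wf hH hf hv).
have hwS : w \in S by rewrite !inE eqxx orbT.
have hwe : inc w e by rewrite /inc eqxx.
have [q [e' [z hear]]] := ear_walk_exists hG hnl hFS hwS he hwe.
case: (hear) => hw hue hfr /andP[hqu hqS] /orP[hzS|]; last exact: ear_walk_closed_walk hear.
have hfre' : fresh G (gE H) e' by apply: (allP hfr); rewrite map_rcons mem_rcons mem_head.
have hze' : inc z e'.
  by move: hw; rewrite walk_rcons => /andP[_ /links_inc/andP[]].
have hzw : z = w by move: hzS; rewrite !inE (negbTE (hdet hfre' hze')) => /eqP.
subst z; exists w, (rcons q (e', w)); rewrite /closed_walk hw hue hfr !map_rcons last_rcons.
rewrite eqxx rcons_uniq hqu (_ : rcons _ _ != [::]) /= ?andbT; last by case: (q).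
by apply: contraL hwS => /(allP hqS).
Qed.

Lemma fresh_setUl F1 F2 f : fresh G (F1 :|: F2) f -> fresh G F1 f.
Proof. by rewrite /fresh inE negb_or => /and3P[-> ->]. Qed.

Lemma fresh_walk_detached a p v : p != [::] -> walk a p -> all (fresh G (gE H)) (map fst p) ->
  v \in gV (walk_graph a p) -> v \notin gV H.
Proof.
move=> hp hw hfr /(walk_graph_cover hp hw)[f]; rewrite inE => /(allP hfr); exact: hdet.
Qed.

(* Otherwise the component of G through the cycle would be the cycle itself. *)
Lemma closed_walk_branch c pc : cacti ends G -> closed_walk c pc ->
  all (fresh G (gE H)) (map fst pc) -> let C := walk_graph c pc in
  exists f a, [/\ fresh G (gE H :|: gE C) f, a \in gV C & inc a f].
Proof.
case=> _ _ hcompG /and5P[hwc hpc /eqP hlc huec huvc] hfrc C.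
case: (boolP [exists f, exists a, [&& fresh G (gE H :|: gE C) f, a \in gV C & inc a f]]).
  by case/existsP => f /existsP[a /and3P[hf ha haf]]; exists f, a.
move=> hno; exfalso.
have hC : wf ends C by apply: wf_walk_graph.
have hsC : subgraph C G by apply: subgraph_walk_graph => // f /(allP hfrc)/andP[].
have hcC : c \in gV C by rewrite !inE eqxx.
apply: (hcompG c); first by case/andP: hsC => /subsetP/(_ c hcC).
rewrite (component_eq hG hC hsC hcC); first exact: closed_walk_cycle.
  by move=> x; apply: walk_graph_connect.
move=> y g hy hg hyg; apply/negPn/negP => hgC; apply: (negP hno).
apply/existsP; exists g; apply/existsP; exists y.
rewrite hy hyg /fresh hg inE negb_or hgC !andbT /=; apply/negP => hgH.
by have := fresh_walk_detached hpc hwc hfrc hy; rewrite (inc_wf hH hgH hyg).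
Qed.

Lemma cycle_ear_cacti_ear c pc a q e z : cacti ends H -> closed_walk c pc ->
  all (fresh G (gE H)) (map fst pc) -> let C := walk_graph c pc in let p := rcons q (e, z) in
  a \in gV C -> walk a p -> uniq (map fst p) -> all (fresh G (gE H :|: gE C)) (map fst p) ->
  uniq (map snd q) && all [predC gV C] (map snd q) -> (z \in gV C) || (z \in map snd q) ->
  cacti_ear G H (gunion C (walk_graph a p)).
Proof.
move=> hcH /and5P[hwc hpc /eqP hlc huec huvc] hfrc C p ha hw hue hfr hq hz.
have hp : p != [::] by rewrite /p; case: (q).
have hfrH : all (fresh G (gE H)) (map fst p) by apply/allP => g /(allP hfr)/fresh_setUl.
have hE : all [predC gE C] (map fst p).
  by apply/allP => g /(allP hfr); rewrite /fresh !inE negb_or => /and3P[].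
set B := gunion C (walk_graph a p).
have hBfresh g : g \in gE B -> fresh G (gE H) g.
  by rewrite inE => /orP[]; rewrite inE => /(allP _); [apply; exact: hfrc | apply].
have hsub g : fresh G (gE H) g -> g \in gE G by case/andP.
apply: (bicycle_cacti_ear (a := a)) => //.
- exact: wf_gunion (wf_walk_graph hwc) (wf_walk_graph hw).
- by apply: subgraph_gunion; apply: subgraph_walk_graph => // g;
    [move/(allP hfrc) | move/(allP hfrH)]; apply: hsub.
- apply/setP => g; rewrite in_setI in_set0; apply/negbTE/negP => /andP[/hBfresh hg hgH].
  by case/andP: hg; rewrite hgH.
- apply/setP => v; rewrite in_setI in_set0; apply/negbTE/negP => /andP[hvH].
  rewrite inE => /orP[/(fresh_walk_detached hpc hwc hfrc)|/(fresh_walk_detached hp hw hfrH)];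
  by rewrite hvH.
- exact: cycle_ear_bicycle.
- by rewrite inE ha.
- exact: cycle_ear_deg.
- exact: cycle_ear_deg_branch.
- exact: cycle_ear_connect.
Qed.

Lemma cacti_ear_detached e : cacti ends G -> cacti ends H -> fresh G (gE H) e ->
  exists P, cacti_ear G H P.
Proof.
move=> hcG hcH he; have [c [pc /andP[hcl hfrc]]] := detached_closed_walk he.
have [f [a [hf ha haf]]] := closed_walk_branch hcG hcl hfrc.
set C := walk_graph c pc in hf ha; set S := gV H :|: gV C.
have hC : wf ends C by case/and5P: hcl => hwc *; apply: wf_walk_graph.
have hFS g v : g \in gE H :|: gE C -> inc v g -> v \in S.
  by rewrite inE => /orP[hg|hg] hv; rewrite inE ?(inc_wf hH hg hv) ?(inc_wf hC hg hv) ?orbT.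
have haS : a \in S by rewrite inE ha orbT.
have [q [e' [z [hw hue hfr /andP[hqu hqS] hz]]]] := ear_walk_exists hG hnl hFS haS hf haf.
exists (gunion C (walk_graph a (rcons q (e', z)))); apply: cycle_ear_cacti_ear => //.
  by rewrite hqu; apply/allP => v /(allP hqS); rewrite !inE negb_or => /andP[].
have hze' : inc z e'.
  by move: hw; rewrite walk_rcons => /andP[_ /links_inc/andP[]].
have hfre' : fresh G (gE H) e'.
  by apply/fresh_setUl/(allP hfr); rewrite map_rcons mem_rcons mem_head.
by move: hz; rewrite inE (negbTE (hdet hfre' hze')).
Qed.

End Detached.

Lemma subgraph_edges_eq G H : no_isolated ends G -> wf ends H -> subgraph H G ->
  gE G \subset gE H -> H = G.
Proof.
move=> hni hH /andP[sV sE] sE'; have hE : gE H = gE G by apply/eqP; rewrite eqEsubset sE.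
apply: mgraph_eq => //; apply/eqP; rewrite eqEsubset sV; apply/subsetP => v hv.
have /set0Pn[e] : incident ends G v != set0 by have := hni v; rewrite /isolated hv.
by rewrite inE -hE => /andP[he hve]; apply: inc_wf hH he hve.
Qed.

Lemma cacti_ear_exists G H : wf ends G -> cacti ends G -> wf ends H -> cacti ends H ->
  ~~ (gE G \subset gE H) -> exists P, cacti_ear G H P.
Proof.
move=> hG hcG hH hcH /subsetPn[e heG heH]; have [_ hnl _] := hcG.
have he : fresh G (gE H) e by rewrite /fresh heG heH.
case: (boolP [exists f, exists u, [&& fresh G (gE H) f, u \in gV H & inc u f]]).
  case/existsP => f /existsP[u /and3P[hf hu huf]].
  exact: cacti_ear_touching hG hnl hH hcH hu hf huf.
move=> hdet; apply: (cacti_ear_detached hG hnl hH _ hcG hcH he) => f v hf hvf.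
by apply: contraNN hdet => hv; apply/existsP; exists f; apply/existsP; exists v; apply/and3P.
Qed.

Definition cacti_ear_sequence G G0 r (P Gs : nat -> mgraph V E) :=
  [/\ Gs 0 = G0, Gs r = G,
      forall i, i <= r -> [/\ wf ends (Gs i), subgraph (Gs i) G & cacti ends (Gs i)],
      forall i, 1 <= i <= r ->
        [/\ wf ends (P i), subgraph (P i) G, Gs i = gunion (Gs i.-1) (P i),
            gE (P i) :&: gE (Gs i.-1) = set0 & ear_attached (Gs i.-1) (P i)] &
      forall i, 1 <= i <= r ->
        proper_subgraph (Gs i.-1) (Gs i) /\ (Delta (Gs i) - Delta (Gs i.-1) = 1)%R].

Lemma cacti_ear_sequence_nil G : wf ends G -> cacti ends G ->
  cacti_ear_sequence G G 0 (fun _ => G) (fun _ => G).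
Proof.
move=> hG hcG; split => // [i _|[]|[]] //; split => //.
by apply/andP; split.
Qed.

Lemma cacti_ear_sequence_cons G H P r Ps Gs : wf ends H -> subgraph H G -> cacti ends H ->
  cacti_ear G H P -> cacti_ear_sequence G (gunion H P) r Ps Gs ->
  cacti_ear_sequence G H r.+1 (fun i => if i == 1 then P else Ps i.-1)
    (fun i => if i == 0 then H else Gs i.-1).
Proof.
move=> hH hsub hcH [hwP hsP hdisj hatt _ hprop hDelta] [h0 hr hall hstep hgrow].
split => //.
- by case => [|i] hi //=; apply: hall.
- by case => [|[|i]] //= hi; apply: hstep.
by case => [|[|i]] //= hi; [rewrite h0 | exact: (hgrow i.+1)].
Qed.

Lemma card_edges_lt_Delta G H : gV G \subset gV H -> (Delta H - Delta G = 1)%R ->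
  #|gE G| < #|gE H|.
Proof.
move=> /subset_leq_card; rewrite /Delta.
move: #|gE G| #|gE H| #|gV G| #|gV H| => a b c d hcd; lia.
Qed.

Lemma cacti_ear_sequence_exists G H : wf ends G -> cacti ends G -> wf ends H ->
  cacti ends H -> subgraph H G -> exists r Ps Gs, cacti_ear_sequence G H r Ps Gs.
Proof.
move=> hG hcG hH hcH hsub; have [hni _ _] := hcG.
have [k] := ubnP (#|gE G| - #|gE H|); elim: k H hH hcH hsub => // k IH H hH hcH hsub hk.
case: (boolP (gE G \subset gE H)) => hGH.
  by rewrite (subgraph_edges_eq hni hH hsub hGH); do 3 eexists; apply: cacti_ear_sequence_nil.
have [P hP] := cacti_ear_exists hG hcG hH hcH hGH.
have hsHP := subgraph_gunion hsub (cacti_ear_sub hP).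
have hlt : #|gE H| < #|gE (gunion H P)|.
  by apply: card_edges_lt_Delta (cacti_ear_Delta hP); apply: subsetUl.
have hle : #|gE (gunion H P)| <= #|gE G| by case/andP: hsHP => _ /subset_leq_card.
have hHP := wf_gunion hH (cacti_ear_wf hP).
have [|r [Ps [Gs hseq]]] := IH (gunion H P) hHP (cacti_ear_cacti hP) hsHP.
  by move: hk; lia.
by do 3 eexists; apply: cacti_ear_sequence_cons hseq.
Qed.

End CactiEars.

Unset Implicit Arguments.

Theorem mainTheorem4 (V E : finType) (ends : E -> V * V) (G G0 : mgraph V E) :
  wf ends G -> wf ends G0 -> cacti ends G -> cacti ends G0 -> subgraph G0 G ->
  G = G0 \/
  exists (r : nat) (P Gs : nat -> mgraph V E),
    [/\ Gs 0 = G0, Gs r = G,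
        forall i, i <= r -> [/\ wf ends (Gs i), subgraph (Gs i) G & cacti ends (Gs i)],
        forall i, 1 <= i <= r ->
          [/\ wf ends (P i), subgraph (P i) G,
              Gs i = gunion (Gs i.-1) (P i),
              gE (P i) :&: gE (Gs i.-1) = set0 &
              [\/ exists x y, is_path_xy ends (P i) x y /\
                                gV (Gs i.-1) :&: gV (P i) = [set x; y],
                  exists x, is_lollipop_x ends (P i) x /\
                                gV (Gs i.-1) :&: gV (P i) = [set x],
                  is_cycle ends (P i) /\ #|gV (Gs i.-1) :&: gV (P i)| = 1
                | is_bicycle ends (P i) /\ gV (Gs i.-1) :&: gV (P i) = set0]] &
        forall i, 1 <= i <= r ->
          proper_subgraph (Gs i.-1) (Gs i) /\
          (Delta (Gs i) - Delta (Gs i.-1) = 1)%R].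
Proof.
move=> hG hG0 hcG hcG0 hsub; right.
exact: cacti_ear_sequence_exists hG hcG hG0 hcG0 hsub.
Qed.
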